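(* For each $n\ge 2$, the monoids $\mathrm{Cat}_n$, $\mathrm{Styl}_n$, and $\mathrm{Kis}_n$ satisfy the same monoid identities.
   Context: A monoid identity is a formal equality $w=w'$ of words $w,w'$ in the free monoid $X^*$ over an alphabet $X$; it holds in a monoid $M$ if $w\varphi=w'\varphi$ for every homomorphism $\varphi\colon X^*\to M$. The stylic monoid $\mathrm{Styl}_n$ is generated by $a_1,\dots,a_n$ subject to: $a_i^2=a_i$ ($1\le i\le n$); $a_ja_ia_k=a_ja_ka_i$ and $a_ia_ka_j=a_ka_ia_j$ for $1\le i<j<k\le n$; $a_ja_ia_i=a_ia_ja_i$ and $a_ja_ja_i=a_ja_ia_j$ for $1\le i<j\le n$. The Kiselman monoid $\mathrm{Kis}_n$ is generated by $a_1,\dots,a_n$ subject to: $a_i^2=a_i$ ($1\le i\le n$); $a_ia_ja_i=a_ja_ia_j=a_ja_i$ for $1\le i<j\le n$. The Catalan monoid $\mathrm{Cat}_n$ is generated by $a_1,\dots,a_n$ subject to: $a_i^2=a_i$ ($1\le i\le n$); $a_ia_k=a_ka_i$ if $|i-k|\ge2$; $a_ia_{i+1}a_i=a_{i+1}a_ia_{i+1}=a_{i+1}a_i$ for $1\le i\le n-1$. *)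

From mathcomp Require Import all_boot.
From Stdlib Require Import PropExtensionality FunctionalExtensionality ProofIrrelevance.
Set Implicit Arguments. Unset Strict Implicit. Unset Printing Implicit Defensive.

Record monoid := Monoid {
  mcar :> Type;
  mmul : mcar -> mcar -> mcar;
  mone : mcar;
  mmulA : forall x y z, mmul x (mmul y z) = mmul (mmul x y) z;
  mmul1 : forall x, mmul mone x = x;
  mmulx1 : forall x, mmul x mone = x }.

(** The free monoid X^* is [seq X] with concatenation and [::]. *)
Definition is_hom (X : Type) (M : monoid) (phi : seq X -> M) : Prop :=
  phi [::] = mone M /\ forall u v, phi (u ++ v) = mmul (phi u) (phi v).

Definition holds_identity (M : monoid) (X : Type) (w w' : seq X) : Prop :=
  forall phi : seq X -> M, is_hom phi -> phi w = phi w'.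

Definition same_identities (M N : monoid) : Prop :=
  forall (X : Type) (w w' : seq X), holds_identity M w w' <-> holds_identity N w w'.

Section Presentation.
Variable A : Type.
Variable R : seq A -> seq A -> Prop.

Inductive cong : seq A -> seq A -> Prop :=
| cong_base p q u v : R u v -> cong (p ++ u ++ q) (p ++ v ++ q)
| cong_refl w : cong w w
| cong_sym u v : cong u v -> cong v u
| cong_trans u v w : cong u v -> cong v w -> cong u w.

Lemma cong_catr u u' v : cong u u' -> cong (u ++ v) (u' ++ v).
Proof.
elim=> [p q x y Rxy| w | x y _ IH | x y z _ IH1 _ IH2].
- by have := cong_base p (q ++ v) Rxy; rewrite -!catA.
- exact: cong_refl.
- exact: cong_sym.
- exact: cong_trans IH2.
Qed.

Lemma cong_catl u v v' : cong v v' -> cong (u ++ v) (u ++ v').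
Proof.
elim=> [p q x y Rxy| w | x y _ IH | x y z _ IH1 _ IH2].
- by have := cong_base (u ++ p) q Rxy; rewrite -!catA.
- exact: cong_refl.
- exact: cong_sym.
- exact: cong_trans IH2.
Qed.

Lemma cong_cat u u' v v' : cong u u' -> cong v v' -> cong (u ++ v) (u' ++ v').
Proof. move=> H1 H2; apply: cong_trans (cong_catr v H1) (cong_catl u' H2). Qed.

Lemma cong_class_eq u v : cong u v -> cong u = cong v.
Proof.
move=> H; apply: functional_extensionality => w; apply: propositional_extensionality.
split=> H'; [exact: cong_trans (cong_sym H) H' | exact: cong_trans H H'].
Qed.

Definition pclass := {P : seq A -> Prop | exists w, P = cong w}.

Definition pcl (w : seq A) : pclass := exist _ (cong w) (ex_intro _ w erefl).

Definition pmul_pred (x y : pclass) : seq A -> Prop :=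
  fun w => exists u v, proj1_sig x u /\ proj1_sig y v /\ cong w (u ++ v).

Lemma pmul_pred_cl (u0 v0 : seq A) (x y : pclass) :
  proj1_sig x = cong u0 -> proj1_sig y = cong v0 -> pmul_pred x y = cong (u0 ++ v0).
Proof.
move=> Hx Hy; apply: functional_extensionality => w; apply: propositional_extensionality.
rewrite /pmul_pred Hx Hy; split.
- move=> [u [v [Hu [Hv Hw]]]].
  exact: cong_trans (cong_cat Hu Hv) (cong_sym Hw).
- move=> Hw; exists u0, v0; split; [exact: cong_refl | split; [exact: cong_refl|]].
  exact: cong_sym.
Qed.

Lemma pmul_proof (x y : pclass) : exists w, pmul_pred x y = cong w.
Proof.
case: x => P [u0 Hu]; case: y => Q [v0 Hv].
exists (u0 ++ v0); exact: pmul_pred_cl.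
Qed.

Definition pmul (x y : pclass) : pclass := exist _ (pmul_pred x y) (pmul_proof x y).

Lemma pclass_eq (x y : pclass) : proj1_sig x = proj1_sig y -> x = y.
Proof.
case: x => P HP; case: y => Q HQ /= E; subst Q; congr exist; exact: proof_irrelevance.
Qed.

Lemma pclE (x : pclass) : exists w, x = pcl w.
Proof. case: x => P [w Hw]; exists w; apply: pclass_eq => /=; exact: Hw. Qed.

Lemma pmul_pcl u v : pmul (pcl u) (pcl v) = pcl (u ++ v).
Proof. apply: pclass_eq => /=; exact: pmul_pred_cl. Qed.

Lemma pmulA (x y z : pclass) : pmul x (pmul y z) = pmul (pmul x y) z.
Proof.
have [u ->] := pclE x; have [v ->] := pclE y; have [w ->] := pclE z.
by rewrite !pmul_pcl catA.
Qed.

Lemma pmul1 (x : pclass) : pmul (pcl [::]) x = x.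
Proof. by have [u ->] := pclE x; rewrite pmul_pcl. Qed.

Lemma pmulx1 (x : pclass) : pmul x (pcl [::]) = x.
Proof. by have [u ->] := pclE x; rewrite pmul_pcl cats0. Qed.

Definition presented_monoid : monoid :=
  @Monoid pclass pmul (pcl [::]) pmulA pmul1 pmulx1.

End Presentation.

(** * The three families. Generator a_i (1 <= i <= n) is the ordinal i-1 : 'I_n,
    so the order of generators is preserved. *)

Definition styl_rel (n : nat) (u v : seq 'I_n) : Prop :=
  (exists i : 'I_n, u = [:: i; i] /\ v = [:: i])
  \/ (exists i j k : 'I_n, i < j < k /\
        ((u = [:: j; i; k] /\ v = [:: j; k; i]) \/ (u = [:: i; k; j] /\ v = [:: k; i; j])))
  \/ (exists i j : 'I_n, i < j /\
        ((u = [:: j; i; i] /\ v = [:: i; j; i]) \/ (u = [:: j; j; i] /\ v = [:: j; i; j]))).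

Definition kis_rel (n : nat) (u v : seq 'I_n) : Prop :=
  (exists i : 'I_n, u = [:: i; i] /\ v = [:: i])
  \/ (exists i j : 'I_n, i < j /\
        ((u = [:: i; j; i] /\ v = [:: j; i]) \/ (u = [:: j; i; j] /\ v = [:: j; i]))).

Definition cat_rel (n : nat) (u v : seq 'I_n) : Prop :=
  (exists i : 'I_n, u = [:: i; i] /\ v = [:: i])
  \/ (exists i k : 'I_n, (i + 2 <= k \/ k + 2 <= i) /\ u = [:: i; k] /\ v = [:: k; i])
  \/ (exists i j : 'I_n, j = i + 1 :> nat /\
        ((u = [:: i; j; i] /\ v = [:: j; i]) \/ (u = [:: j; i; j] /\ v = [:: j; i]))).

Definition Styl (n : nat) : monoid := presented_monoid (@styl_rel n).
Definition Kis (n : nat) : monoid := presented_monoid (@kis_rel n).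
Definition Cat (n : nat) : monoid := presented_monoid (@cat_rel n).

From mathcomp Require Import all_boot zify.
From Stdlib Require Import Classical IndefiniteDescription.
Set Implicit Arguments. Unset Strict Implicit. Unset Printing Implicit Defensive.

(* Each defining relation of Kis n holds in Styl n, and each one of Styl n holds in
   Cat n, so Styl n is a quotient of Kis n and Cat n a quotient of Styl n: identities of
   Kis n hold in Styl n, and identities of Styl n hold in Cat n.
   Conversely, two words are equal in Kis n as soon as, for every strictly decreasing
   sequence d of generators, greedily matching d as a subsequence of either word leaves
   the same unmatched suffix of d (induction on the largest generator involved). The
   length of that suffix is read off from an action of Cat n on the natural numbers, after
   replacing the letters of d by suitable generators of Cat n; hence identities of Cat n
   hold in Kis n. *)

Definition subst_word (A X : Type) (f : X -> seq A) (w : seq X) : seq A :=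
  flatten (map f w).

Lemma subst_word_cat A X (f : X -> seq A) u v :
  subst_word f (u ++ v) = subst_word f u ++ subst_word f v.
Proof. by rewrite /subst_word map_cat flatten_cat. Qed.

Lemma subst_word_comp A B X (g : A -> seq B) (f : X -> seq A) w :
  subst_word g (subst_word f w) = subst_word (subst_word g \o f) w.
Proof.
elim: w => //= x w IH.
by rewrite -[x :: w]cat1s !subst_word_cat IH /= /subst_word /= cats0.
Qed.

Section Presentation.
Variables (A : Type) (R : seq A -> seq A -> Prop).

Lemma cong_rel u v : R u v -> cong R u v.
Proof. by move=> Ruv; have := cong_base [::] [::] Ruv; rewrite /= !cats0. Qed.

Lemma pcl_eqP u v : pcl R u = pcl R v <-> cong R u v.
Proof.
split=> [/(congr1 (@proj1_sig _ _)) /= -> | /cong_class_eq Euv]; first exact: cong_refl.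
by apply: pclass_eq.
Qed.

Lemma is_hom_pcl_subst X (f : X -> seq A) :
  @is_hom X (presented_monoid R) (fun w => pcl R (subst_word f w)).
Proof. by split=> // u v /=; rewrite subst_word_cat pmul_pcl. Qed.

Lemma hom_presentedE X (phi : seq X -> presented_monoid R) :
  is_hom phi -> exists f : X -> seq A, forall w, phi w = pcl R (subst_word f w).
Proof.
move=> [phi0 phiM].
have /all_tag[f phi1] : forall x, {u | phi [:: x] = pcl R u}.
  by move=> x; apply: constructive_indefinite_description; apply: pclE.
exists f; elim=> [|x w IH] //=.
by rewrite -cat1s phiM phi1 IH /= pmul_pcl.
Qed.

Lemma holds_identity_presentedP X (w w' : seq X) :
  holds_identity (presented_monoid R) w w' <->
  forall f : X -> seq A, cong R (subst_word f w) (subst_word f w').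
Proof.
split=> [Hid f | Hcong phi /hom_presentedE[f phiE]]; last by rewrite !phiE; apply/pcl_eqP.
exact/pcl_eqP/(Hid _ (is_hom_pcl_subst f)).
Qed.

End Presentation.

Lemma cong_sub A (R1 R2 : seq A -> seq A -> Prop) :
  (forall u v, R1 u v -> cong R2 u v) -> forall u v, cong R1 u v -> cong R2 u v.
Proof.
move=> R12 u v; elim=> [p q x y /R12 Rxy | w | x y _ IH | x y z _ IH1 _ IH2].
- exact/cong_catl/cong_catr.
- exact: cong_refl.
- exact: cong_sym.
- exact: cong_trans IH2.
Qed.

Lemma holds_identity_quotient A (R1 R2 : seq A -> seq A -> Prop) X (w w' : seq X) :
  (forall u v, R1 u v -> cong R2 u v) ->
  holds_identity (presented_monoid R1) w w' -> holds_identity (presented_monoid R2) w w'.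
Proof.
move=> R12 /holds_identity_presentedP Hid; apply/holds_identity_presentedP => f.
exact: cong_sub (Hid f).
Qed.

Section Relations.
Variable n : nat.
Implicit Types i j k : 'I_n.

Lemma kis_styl u v : kis_rel u v -> cong (@styl_rel n) u v.
Proof.
have styl_idem i p q : cong (@styl_rel n) (p ++ [:: i; i] ++ q) (p ++ [:: i] ++ q).
  by apply: cong_base; left; exists i.
case=> [[i [-> ->]] | [i [j [lt_ij [[-> ->] | [-> ->]]]]]].
- exact: (styl_idem i [::] [::]).
- apply: cong_trans (_ : cong _ [:: j; i; i] _); last exact: (styl_idem i [:: j] [::]).
  by apply/cong_sym/cong_rel; right; right; exists i, j; split=> //; left.
- apply: cong_trans (_ : cong _ [:: j; j; i] _); last exact: (styl_idem j [::] [:: i]).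
  by apply/cong_sym/cong_rel; right; right; exists i, j; split=> //; right.
Qed.

Local Notation C := (cong (@cat_rel n)).

Lemma cat_idem p q i : C (p ++ [:: i; i] ++ q) (p ++ [:: i] ++ q).
Proof. by apply: cong_base; left; exists i. Qed.

Lemma cat_comm p q i k : i + 2 <= k -> C (p ++ [:: i; k] ++ q) (p ++ [:: k; i] ++ q).
Proof. by move=> far; apply: cong_base; right; left; exists i, k; split=> //; left. Qed.

Lemma cat_iji i j : i < j -> C [:: i; j; i] [:: j; i].
Proof.
rewrite leq_eqVlt => /orP[/eqP adj | far].
  by apply: cong_rel; right; right; exists i, j; split; [rewrite -adj addn1 | left].
apply: cong_trans (_ : C [:: i; i; j] _).
  by apply: cong_sym; apply: (cat_comm [:: i] [::]); rewrite addn2.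
apply: cong_trans (_ : C [:: i; j] _); first exact: (cat_idem [::] [:: j]).
by apply: (cat_comm [::] [::]); rewrite addn2.
Qed.

Lemma cat_jij i j : i < j -> C [:: j; i; j] [:: j; i].
Proof.
rewrite leq_eqVlt => /orP[/eqP adj | far].
  by apply: cong_rel; right; right; exists i, j; split; [rewrite -adj addn1 | right].
apply: cong_trans (_ : C [:: j; j; i] _); last exact: (cat_idem [::] [:: i]).
by apply: (cat_comm [:: j] [::]); rewrite addn2.
Qed.

Lemma styl_cat u v : styl_rel u v -> C u v.
Proof.
case=> [[i [-> ->]]|[[i [j [k [/andP[lt_ij lt_jk] [[-> ->]|[-> ->]]]]]]|
         [i [j [lt_ij [[-> ->]|[-> ->]]]]]]].
- exact: (cat_idem [::] [::]).
- by apply: (cat_comm [:: j] [::]); rewrite addn2 (leq_ltn_trans lt_ij).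
- by apply: (cat_comm [::] [:: j]); rewrite addn2 (leq_ltn_trans lt_ij).
- apply: cong_trans (_ : C [:: j; i] _); first exact: (cat_idem [:: j] [::]).
  exact/cong_sym/cat_iji.
- apply: cong_trans (_ : C [:: j; i] _); first exact: (cat_idem [::] [:: i]).
  exact/cong_sym/cat_jij.
Qed.

End Relations.

Section GreedyMatching.
Variable T : eqType.
Implicit Types (x y : T) (d s t u v p q r : seq T).

Lemma first_occurrence x p : x \in p -> exists p1 p2, p = p1 ++ x :: p2 /\ x \notin p1.
Proof.
elim: p => // y p IH; rewrite inE; case: eqP => [-> _ | ne_xy /= /IH[p1 [p2 [-> xNp1]]]].
  by exists [::], p.
by exists (y :: p1), p2; rewrite inE negb_or xNp1 andbT; split=> //; apply/eqP.
Qed.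

Lemma last_occurrence x p : x \in p -> exists p1 p2, p = p1 ++ x :: p2 /\ x \notin p2.
Proof.
rewrite -mem_rev => /first_occurrence[q1 [q2 [Ep xNq1]]].
exists (rev q2), (rev q1); rewrite mem_rev -[p]revK Ep rev_cat rev_cons cat_rcons.
by [].
Qed.

Lemma subseq_cons_first x s q r :
  x \notin q -> subseq (x :: s) (q ++ x :: r) -> subseq s r.
Proof.
elim: q => [|y q IH] /=; first by rewrite eqxx.
by rewrite inE negb_or => /andP[/negbTE-> /IH].
Qed.

Lemma subseq_rcons_last x s p q :
  x \notin q -> subseq (rcons s x) (p ++ x :: q) -> subseq s p.
Proof.
move=> xNq; rewrite -subseq_rev -(subseq_rev s) rev_rcons rev_cat rev_cons -cats1 -catA.
by apply: subseq_cons_first; rewrite mem_rev.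
Qed.

Fixpoint unmatched d u :=
  if u is y :: u' then
    unmatched (if d is x :: d' then if x == y then d' else d else d) u'
  else d.

Lemma unmatched_cat d u v : unmatched d (u ++ v) = unmatched (unmatched d u) v.
Proof. by elim: u d => //= y u IH d; rewrite IH. Qed.

Lemma unmatched_nil u : unmatched [::] u = [::].
Proof. by elim: u. Qed.

Lemma unmatched_drop d u : exists j, unmatched d u = drop j d.
Proof.
elim: u d => [|y u IH] [|x d] /=; try by exists 0; rewrite ?unmatched_nil.
case: eqP => _; last exact: IH.
by have [j ->] := IH d; exists j.+1.
Qed.

Lemma size_unmatched d u : size (unmatched d u) <= size d.
Proof. by have [j ->] := unmatched_drop d u; rewrite size_drop leq_subr. Qed.

Lemma unmatchedE d u : unmatched d u = drop (size d - size (unmatched d u)) d.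
Proof.
have [j ->] := unmatched_drop d u; rewrite size_drop.
have [le_jd | /ltnW le_dj] := leqP j (size d); first by rewrite subKn.
by rewrite (eqP le_dj) subn0 !drop_oversize.
Qed.

Lemma unmatched_eq_size d u v :
  size (unmatched d u) = size (unmatched d v) -> unmatched d u = unmatched d v.
Proof. by move=> Esize; rewrite unmatchedE Esize -unmatchedE. Qed.

Lemma subseq_unmatched d u : subseq d u = (unmatched d u == [::]).
Proof.
by elim: u d => [|y u IH] [|x d] //=; rewrite ?unmatched_nil.
Qed.

Lemma unmatched_notin s x t u :
  x \notin u -> unmatched (s ++ x :: t) u = unmatched s u ++ x :: t.
Proof.
elim: u s => //= y u IH [|z s]; rewrite inE negb_or => /andP[/negbTE ne_xy xNu] /=.
  by rewrite ne_xy (IH [::]).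
by case: eqP => _; [exact: IH | exact: (IH (z :: s))].
Qed.

Lemma unmatched_cons_notin d y u : y \notin d -> unmatched d (y :: u) = unmatched d u.
Proof. by case: d => //= x d; rewrite inE negb_or eq_sym => /andP[/negbTE->]. Qed.

Lemma unmatched_prefix s t u : unmatched (s ++ t) u = t -> unmatched s u = [::].
Proof.
elim: u s => [|y u IH] [|x s] //=.
- by move/(congr1 size); rewrite /= size_cat; lia.
- by rewrite unmatched_nil.
- by case: eqP => _; [exact: IH | exact: (IH (x :: s))].
Qed.

(* Greedy matching never looks past the first letter it fails to match. *)
Lemma unmatched_stuck s x t t' u :
  unmatched (s ++ x :: t) u = x :: t -> unmatched (s ++ x :: t') u = x :: t'.
Proof.
elim: u s => [|y u IH] [|z s] //=.
- by move/(congr1 size); rewrite /= size_cat /=; lia.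
- case: eqP => _; last exact: (IH [::]).
  by move/(congr1 size) => /= Esize; have := size_unmatched t u; rewrite Esize ltnn.
- by case: eqP => _; [apply: IH | apply: (IH (z :: s))].
Qed.

End GreedyMatching.

Section Kiselman.
Variable n : nat.
Local Notation I := 'I_n.
Local Notation K := (cong (@kis_rel n)).
Local Notation bounded k := (all (fun x : I => x < k)).
Implicit Types (i j c m : I) (d p q u v w y z : seq I).

Definition decreasing d := sorted (fun x y : I => y < x) d.

Lemma decreasing_unmatched d u : decreasing d -> decreasing (unmatched d u).
Proof. by have [j ->] := unmatched_drop d u; apply: drop_sorted. Qed.

Lemma bounded_unmatched k d u : bounded k d -> bounded k (unmatched d u).
Proof.
have [j ->] := unmatched_drop d u => /allP bd_d.
by apply/allP => x /mem_drop /bd_d.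
Qed.

Lemma decreasing_uniq d : decreasing d -> uniq d.
Proof.
apply: sorted_uniq => [y x z /= lt_yx lt_zy | x]; last exact: ltnn.
exact: ltn_trans lt_zy lt_yx.
Qed.

Lemma decreasing_swap_tail d c t j :
  decreasing (d ++ c :: t) -> j < c -> decreasing (d ++ [:: c; j]).
Proof.
rewrite /decreasing; case: d => [|x d] /=; first by move=> _ ->.
by rewrite !cat_path /= => /and3P[-> -> _] ->.
Qed.

Lemma notin_bounded m w : bounded m w -> m \notin w.
Proof. by move=> bd; apply/negP => /(allP bd); rewrite ltnn. Qed.

Lemma bounded_notin_top m w : bounded m.+1 w -> m \notin w -> bounded m w.
Proof.
move=> /allP bd mNw; apply/allP => x xw; move: (bd x xw).
rewrite ltnS leq_eqVlt => /orP[/eqP/val_inj Exm | //].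
by move: mNw; rewrite -Exm xw.
Qed.

Lemma kis_rel_unmatched l r d :
  kis_rel l r -> decreasing d -> unmatched d l = unmatched d r.
Proof.
case=> [[i [-> ->]] | [i [j [lt_ij [[-> ->] | [-> ->]]]]]];
case: d => [|x [|y [|z d]]] //= dec_d; repeat case/andP: dec_d => ? dec_d;
by repeat (case: eqP => //= ?; subst); lia.
Qed.

Lemma kis_unmatched u v d : K u v -> decreasing d -> unmatched d u = unmatched d v.
Proof.
move=> Kuv; elim: Kuv d => [p q l r Rlr | w | u' v' _ IH | u' v' w _ IH1 _ IH2] d dec_d //.
- rewrite !unmatched_cat (kis_rel_unmatched Rlr) //; exact: decreasing_unmatched.
- by rewrite IH.
- by rewrite IH1 ?IH2.
Qed.

Lemma kis_idem i : K [:: i; i] [:: i].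
Proof. by apply: cong_rel; left; exists i. Qed.

Lemma kis_iji i j : i < j -> K [:: i; j; i] [:: j; i].
Proof. by move=> lt_ij; apply: cong_rel; right; exists i, j; split=> //; left. Qed.

Lemma kis_jij i j : i < j -> K [:: j; i; j] [:: j; i].
Proof. by move=> lt_ij; apply: cong_rel; right; exists i, j; split=> //; right. Qed.

Lemma kis_absorb_above i w :
  all (fun x : I => i < x) w -> K (i :: w ++ [:: i]) (w ++ [:: i]).
Proof.
elim: w => [|x w IH] /=; first by move=> _; apply: kis_idem.
move=> /andP[lt_ix /IH Kw].
apply: cong_trans (_ : K ([:: i; x] ++ i :: w ++ [:: i]) _).
  exact: (cong_catl [:: i; x] (cong_sym Kw)).
apply: cong_trans (_ : K ([:: x; i] ++ w ++ [:: i]) _).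
  by rewrite -[i :: w ++ _]cat1s catA; apply/cong_catr/kis_iji.
exact: (cong_catl [:: x] Kw).
Qed.

Lemma kis_absorb_below i w :
  all (fun x : I => x < i) w -> K (i :: w ++ [:: i]) (i :: w).
Proof.
elim: w => [|x w IH] /=; first by move=> _; apply: kis_idem.
move=> /andP[lt_xi /IH Kw].
apply: cong_trans (_ : K ([:: i; x] ++ i :: w ++ [:: i]) _).
  exact: (cong_catr _ (cong_sym (kis_jij lt_xi))).
apply: cong_trans (_ : K ([:: i; x] ++ i :: w) _); first exact: (cong_catl [:: i; x] Kw).
exact: (cong_catr _ (kis_jij lt_xi)).
Qed.

Lemma kis_drop_final i w z :
  all (fun x : I => i < x) w -> K z (i :: z) -> K (i :: w ++ z) (w ++ z).
Proof.
move=> gt_w Kz.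
apply: cong_trans (_ : K ((i :: w ++ [:: i]) ++ z) _).
  by rewrite /= -catA; apply: (cong_catl (i :: w)).
apply: cong_trans (_ : K ((w ++ [:: i]) ++ z) _).
  exact/cong_catr/kis_absorb_above.
by rewrite -catA; apply: cong_catl; apply: cong_sym.
Qed.

Lemma kis_erase_repeats m y w : bounded m y -> all (fun x : I => x <= m) w ->
  K (m :: y ++ w) (m :: y ++ filter (predC1 m) w).
Proof.
elim: w y => [|x w IH] y bd_y /=; first by move=> _; apply: cong_refl.
move=> /andP[le_xm le_wm]; case: eqP => [-> | ne_xm] /=.
  apply: cong_trans (IH y bd_y le_wm).
  by have := cong_catr w (kis_absorb_below bd_y); rewrite /= -catA.
have bd_yx : bounded m (y ++ [:: x]).
  by rewrite all_cat bd_y /= andbT ltn_neqAle le_xm andbT; apply/eqP => /val_inj.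
by have := IH _ bd_yx le_wm; rewrite -!catA.
Qed.

Lemma kis_split_top m w : bounded m.+1 w -> m \in w ->
  exists w0 z, [/\ bounded m w0, bounded m z & K w (w0 ++ m :: z)].
Proof.
move=> bd_w /first_occurrence[w0 [w1 [Ew mNw0]]].
move: bd_w; rewrite Ew all_cat /= => /and3P[bd_w0 _ bd_w1].
exists w0, (filter (predC1 m) w1); split.
- exact: bounded_notin_top.
- apply: bounded_notin_top; last by rewrite mem_filter /= eqxx.
  by rewrite all_filter; apply: sub_all bd_w1 => x /= ->; rewrite implybT.
- by apply: cong_catl; apply: (kis_erase_repeats (y := [::])).
Qed.

Definition agree k u v :=
  forall d, decreasing d -> bounded k d -> unmatched d u = unmatched d v.

Lemma agree_refl k u : agree k u u.
Proof. by []. Qed.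

Lemma agree_sym k u v : agree k u v -> agree k v u.
Proof. by move=> agr d dec_d bd_d; rewrite agr. Qed.

Lemma agree_trans k u v w : agree k u v -> agree k v w -> agree k u w.
Proof. by move=> agr agr' d dec_d bd_d; rewrite agr ?agr'. Qed.

Lemma agree_cat k u u' v v' : agree k u u' -> agree k v v' -> agree k (u ++ v) (u' ++ v').
Proof.
move=> agr_u agr_v d dec_d bd_d; rewrite !unmatched_cat agr_u // agr_v //.
  exact: decreasing_unmatched.
exact: bounded_unmatched.
Qed.

Lemma kis_agree k u v : K u v -> agree k u v.
Proof. by move=> Kuv d dec_d _; apply: kis_unmatched. Qed.

Lemma agreeS k u v : agree k.+1 u v -> agree k u v.
Proof. by move=> agr d dec_d bd_d; apply: agr => //; apply: sub_all bd_d => x /ltnW. Qed.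

Lemma agree_mem k u v (x : I) : x < k -> agree k u v -> (x \in u) = (x \in v).
Proof. by move=> lt_xk agr; rewrite -!sub1seq !subseq_unmatched (agr [:: x]) //= lt_xk. Qed.

Definition final p i := exists p1 p2, p = p1 ++ i :: p2 /\ all (fun x : I => i < x) p2.

Definition absorbs k z i := agree k (i :: z) z.

Lemma final_rcons p c i : final (rcons p c) i -> i = c \/ final p i /\ i < c.
Proof.
case=> p1 [p2 []]; case/lastP: p2 => [|p2 x] Ep gt_p2.
  by left; move: Ep; rewrite cats1 => /rcons_inj[_ ->].
move: Ep gt_p2; rewrite -rcons_cons -rcons_cat => /rcons_inj[Ep <-].
rewrite all_rcons => /andP[lt_ix gt_p2]; right; split=> //.
by exists p1, p2.
Qed.

Lemma absorbs_agree k z z' i : agree k z z' -> absorbs k z i -> absorbs k z' i.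
Proof.
rewrite /absorbs => agr abs.
have agr_i : agree k (i :: z') (i :: z) := agree_cat (agree_refl [:: i]) (agree_sym agr).
exact: agree_trans agr_i (agree_trans abs agr).
Qed.

Lemma absorbs_cons k z i c : i < c -> absorbs k z i -> absorbs k (c :: z) i.
Proof.
rewrite /absorbs => lt_ic abs.
apply: agree_trans (_ : agree k ([:: i; c; i] ++ z) _).
  exact: (agree_cat (agree_refl [:: i; c]) (agree_sym abs)).
apply: agree_trans (_ : agree k ([:: c; i] ++ z) _).
  exact: (agree_cat (kis_agree (kis_iji lt_ic)) (agree_refl z)).
exact: (agree_cat (agree_refl [:: c]) abs).
Qed.

Lemma absorbs_self k z c : absorbs k (c :: z) c.
Proof. exact: (agree_cat (kis_agree (kis_idem c)) (agree_refl z)). Qed.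

(* If [c] is matched after [p] but not after [p'], then [c] followed by a smaller letter
   occurring after the last [c] of [p'] separates [rcons p c] from [rcons p' c]. *)
Lemma agree_rcons_mismatch k p p' c d t : c < k -> ~ final p' c ->
  agree k (rcons p c) (rcons p' c) -> decreasing d -> bounded k d ->
  unmatched d p = c :: t -> unmatched d p' = t -> False.
Proof.
move=> lt_ck nfin agr dec_d bd_d Ep Ep'.
have [l El] := unmatched_drop d p.
have Ed : d = take l d ++ c :: t by rewrite -Ep El cat_take_drop.
set d1 := take l d in Ed.
have sub_p' : subseq (rcons d1 c) p'.
  by rewrite subseq_unmatched; apply/eqP/(unmatched_prefix (t := t)); rewrite cat_rcons -Ed.
have /last_occurrence[p1 [p2 [Ep'2 cNp2]]] : c \in p'.
  by apply: (mem_subseq sub_p'); rewrite mem_rcons mem_head.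
have sub_p1 : subseq d1 p1 by apply: subseq_rcons_last cNp2 _; rewrite -Ep'2.
have [j j_p2 lt_jc] : exists2 j : I, j \in p2 & j < c.
  have /allPn[j j_p2 le_jc] : ~~ all (fun x : I => c < x) p2.
    by apply/negP => gt_p2; apply: nfin; exists p1, p2.
  exists j => //; rewrite ltn_neqAle leqNgt le_jc andbT.
  by apply: contraNneq cNp2 => /val_inj <-.
set e := d1 ++ [:: c; j].
have dec_e : decreasing e by apply: (decreasing_swap_tail (t := t)) lt_jc; rewrite -Ed.
have bd_e : bounded k e.
  move: bd_d; rewrite Ed /e !all_cat /= => /and3P[-> -> _] /=.
  by rewrite (ltn_trans lt_jc lt_ck).
have : unmatched e (rcons p' c) = [::].
  apply/eqP; rewrite -subseq_unmatched; apply: subseq_trans (subseq_rcons p' c).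
  by rewrite Ep'2; apply: cat_subseq sub_p1 _; rewrite /= eqxx sub1seq.
rewrite -(agr _ dec_e bd_e) -cats1 unmatched_cat.
by rewrite (unmatched_stuck (t := t)) -?Ed //= eqxx.
Qed.

Lemma agree_cancel_last k p p' c : c < k -> ~ final p c -> ~ final p' c ->
  agree k (rcons p c) (rcons p' c) -> agree k p p'.
Proof.
move=> lt_ck nfin nfin' agr d dec_d bd_d.
have mism := agree_rcons_mismatch lt_ck nfin' agr dec_d bd_d.
have mism' := agree_rcons_mismatch lt_ck nfin (agree_sym agr) dec_d bd_d.
move: (agr d dec_d bd_d) mism mism'; rewrite -!cats1 !unmatched_cat.
case: (unmatched d p) => [|x t]; case: (unmatched d p') => [|y t'] //=.
- by case: eqP => // -> <- _ /(_ [::] erefl erefl).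
- by case: eqP => // -> -> /(_ [::] erefl erefl).
- case: eqP => [-> | _]; case: eqP => [-> | _] //; try by move=> ->.
  + by move=> <- /(_ t erefl erefl).
  + by move=> -> _ /(_ t' erefl erefl).
Qed.

Lemma agree_cancel_suffix k z : bounded k z -> forall p p',
  (forall i, final p i -> ~ absorbs k z i) -> (forall i, final p' i -> ~ absorbs k z i) ->
  agree k (p ++ z) (p' ++ z) -> agree k p p'.
Proof.
elim: z => [|c z IH] /=; first by move=> _ p p' _ _; rewrite !cats0.
move=> /andP[lt_ck bd_z] p p' nabs nabs' agr.
have [abs_c | nabs_c] := classic (absorbs k z c).
  have agr_z : agree k (c :: z) z := abs_c.
  have nabs_z q : (forall i, final q i -> ~ absorbs k (c :: z) i) ->
      forall i, final q i -> ~ absorbs k z i.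
    by move=> nq i /nq nabs_i /(absorbs_agree (agree_sym agr_z)).
  apply: IH => //; [exact: nabs_z | exact: nabs_z |].
  have agr_p q : agree k (q ++ z) (q ++ c :: z).
    exact: agree_cat (agree_refl q) (agree_sym agr_z).
  exact: agree_trans (agr_p p) (agree_trans agr (agree_sym (agr_p p'))).
have nabs_rcons q : (forall i, final q i -> ~ absorbs k (c :: z) i) ->
    forall i, final (rcons q c) i -> ~ absorbs k z i.
  move=> nq i /final_rcons[-> // | [fin_i lt_ic]].
  by move/(absorbs_cons lt_ic); apply: nq.
have nfin q : (forall i, final q i -> ~ absorbs k (c :: z) i) -> ~ final q c.
  by move=> nq /nq; apply; apply: absorbs_self.
apply: (agree_cancel_last lt_ck (nfin _ nabs) (nfin _ nabs')).
by apply: IH => //; [exact: nabs_rcons | exact: nabs_rcons | rewrite !cat_rcons].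
Qed.

Definition complete_below k :=
  forall u v, bounded k u -> bounded k v -> agree k u v -> K u v.

Section TopLetter.
Variable m : I.
Hypothesis complete_m : complete_below m.

Lemma absorb_final_letters z p : bounded m z -> bounded m p ->
  exists2 q, bounded m q & [/\ K (p ++ z) (q ++ z), K (p ++ m :: z) (q ++ m :: z)
                             & forall i, final q i -> ~ absorbs m z i].
Proof.
move=> bd_z; have [s] := ubnP (size p); elim: s p => // s IH p /ltnSE le_ps bd_p.
have [[i [[p1 [p2 [Ep gt_p2]]] abs_i]] | nabs] :=
  classic (exists i, final p i /\ absorbs m z i); last first.
  exists p => //; split; try exact: cong_refl.
  by move=> i fin_i abs_i; apply: nabs; exists i.
move: bd_p le_ps; rewrite Ep all_cat size_cat /= => /and3P[bd_p1 lt_im bd_p2] le_ps.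
have Kz : K z (i :: z) by apply: complete_m; rewrite /= ?lt_im //; apply: agree_sym.
have [||q bd_q [K1 K2 nabs]] := IH (p1 ++ p2); first by rewrite size_cat; lia.
  by rewrite all_cat bd_p1.
exists q => //; split=> //.
- apply: cong_trans K1; rewrite -!catA; apply: cong_catl.
  exact: kis_drop_final.
- apply: cong_trans K2; rewrite -!catA; apply: cong_catl.
  have gt_p2m : all (fun x : I => i < x) (p2 ++ [:: m]) by rewrite all_cat gt_p2 /= lt_im.
  by have := kis_drop_final gt_p2m Kz; rewrite -catA.
Qed.

Lemma kis_insert_top p p' z : bounded m p -> bounded m p' -> bounded m z ->
  agree m (p ++ z) (p' ++ z) -> K (p ++ m :: z) (p' ++ m :: z).
Proof.
move=> bd_p bd_p' bd_z agr.
have [q bd_q [K1 K2 nabs]] := absorb_final_letters bd_z bd_p.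
have [q' bd_q' [K1' K2' nabs']] := absorb_final_letters bd_z bd_p'.
have agr_q : agree m q q'.
  apply: (agree_cancel_suffix bd_z nabs nabs').
  exact: agree_trans (agree_sym (kis_agree K1)) (agree_trans agr (kis_agree K1')).
apply: cong_trans K2 (cong_trans _ (cong_sym K2')).
exact/cong_catr/complete_m.
Qed.

End TopLetter.

Lemma agree_split_top m u0 v0 z z' : bounded m u0 -> bounded m v0 ->
  agree m.+1 (u0 ++ m :: z) (v0 ++ m :: z') -> agree m z z' /\ agree m (u0 ++ z) (v0 ++ z').
Proof.
move=> bd_u0 bd_v0 agr; split=> d dec_d bd_d; last first.
  have bd_d' : bounded m.+1 d by apply: sub_all bd_d => x /ltnW.
  have mN w : m \notin unmatched d w by apply/notin_bounded/bounded_unmatched.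
  by have := agr d dec_d bd_d'; rewrite !unmatched_cat !unmatched_cons_notin.
have dec_md : decreasing (m :: d).
  by case: d dec_d bd_d => //= x d -> /andP[->].
have bd_md : bounded m.+1 (m :: d) by rewrite /= ltnSn; apply: sub_all bd_d => x /ltnW.
have skip_m w : bounded m w -> unmatched (m :: d) w = m :: d.
  by move=> bd_w; rewrite -[m :: d]cat0s unmatched_notin ?notin_bounded // unmatched_nil.
have := agr _ dec_md bd_md.
by rewrite !unmatched_cat (skip_m _ bd_u0) (skip_m _ bd_v0) /= eqxx.
Qed.

Theorem kis_complete_below k : complete_below k.
Proof.
elim: k => [|k IHk] u v bd_u bd_v agr.
  by case: u v bd_u bd_v {agr} => [|? ?] [|? ?] // _ _; apply: cong_refl.
have [le_nk | lt_kn] := leqP n k.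
  have bd w : bounded k w by apply/allP => x _; apply: leq_trans (ltn_ord x) le_nk.
  exact: IHk (bd u) (bd v) (agreeS agr).
pose m : I := Ordinal lt_kn; rewrite -[k]/(val m) in IHk bd_u bd_v agr *.
have [mu | muN] := boolP (m \in u); last first.
  have mvN : m \notin v by rewrite -(agree_mem (ltnSn m) agr).
  by apply: IHk; rewrite ?bounded_notin_top //; exact: agreeS.
have mv : m \in v by rewrite -(agree_mem (ltnSn m) agr).
have [u0 [z [bd_u0 bd_z Ku]]] := kis_split_top bd_u mu.
have [v0 [z' [bd_v0 bd_z' Kv]]] := kis_split_top bd_v mv.
have agr' : agree m.+1 (u0 ++ m :: z) (v0 ++ m :: z').
  exact: agree_trans (agree_sym (kis_agree Ku)) (agree_trans agr (kis_agree Kv)).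
have [agr_z agr_uz] := agree_split_top bd_u0 bd_v0 agr'.
have Kz : K z z' := IHk _ _ bd_z bd_z' agr_z.
apply: cong_trans Ku (cong_trans _ (cong_sym Kv)).
apply: cong_trans (_ : K (v0 ++ m :: z) _).
  apply: kis_insert_top => //.
  exact: agree_trans agr_uz (agree_cat (agree_refl v0) (agree_sym (kis_agree Kz))).
exact: (cong_catl v0 (cong_catl [:: m] Kz)).
Qed.

Theorem kis_complete u v :
  (forall d, decreasing d -> unmatched d u = unmatched d v) -> K u v.
Proof.
move=> agr; have bd w : bounded n w by apply/allP => x _; apply: ltn_ord.
by apply: kis_complete_below (bd u) (bd v) _ => d dec_d _; apply: agr.
Qed.

End Kiselman.

Section CatalanAction.
Variable n : nat.
Local Notation I := 'I_n.
Implicit Types (d u v : seq I) (g : I).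

Definition cat_act (s : nat) (t : I) : nat := if s == t.+1 then (t : nat) else s.

Definition cat_run s u := foldl cat_act s u.

Lemma cat_run_cat s u v : cat_run s (u ++ v) = cat_run (cat_run s u) v.
Proof. exact: foldl_cat. Qed.

Lemma cat_rel_run l r s : cat_rel l r -> cat_run s l = cat_run s r.
Proof.
case=> [[i [-> ->]] | [[i [k [far [-> ->]]]] | [i [j [adj [[-> ->] | [-> ->]]]]]]];
(* split on the innermost comparisons first, so that every test becomes linear *)
rewrite /cat_run /cat_act /=; by repeat match goal with |- context [?x == ?y] =>
  lazymatch x with context [if _ then _ else _] => fail | _ => case: (x =P y) => ? end end;
  lia.
Qed.

Lemma cat_run_cong u v s : cong (@cat_rel n) u v -> cat_run s u = cat_run s v.
Proof.
move=> Cuv; elim: Cuv s => [p q l r Rlr | w | u' v' _ IH | u' v' w _ IH1 _ IH2] s //.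
- by rewrite !cat_run_cat (cat_rel_run _ Rlr).
- by rewrite IH1 IH2.
Qed.

Lemma cat_run0 u : cat_run 0 u = 0.
Proof. by elim: u. Qed.

(* Letter [i] of [d] (from 0) becomes the generator moving [size d - i] down by one, so
   that [cat_run] counts unmatched letters; [insubd] never falls back to its default
   because [size d <= n] wherever this is used. *)
Definition cat_code d g : seq I :=
  if g \in d then [:: insubd g (size d - (index g d).+1)] else [::].

Lemma cat_run_code d g j : uniq d -> size d <= n -> j < size d ->
  cat_run (size d - j) (cat_code d g) =
  if nth g d j == g then size d - j.+1 else size d - j.
Proof.
move=> uniq_d size_d lt_jd; rewrite /cat_code.
case: ifPn => [g_d | gNd]; last first.
  by case: eqP => // Eg; move: gNd; rewrite -Eg mem_nth.
have lt_id : index g d < size d by rewrite index_mem.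
have lt_n : size d - (index g d).+1 < n by lia.
rewrite /cat_run /= /cat_act val_insubd lt_n.
have -> : (size d - j == (size d - (index g d).+1).+1) = (nth g d j == g).
  apply/eqP/eqP => [E | <-]; last by rewrite index_uniq //; lia.
  by rewrite (_ : j = index g d) ?nth_index //; lia.
by case: eqP => // <-; rewrite index_uniq //; lia.
Qed.

Lemma cat_run_unmatched d u j : uniq d -> size d <= n -> j <= size d ->
  cat_run (size d - j) (subst_word (cat_code d) u) = size (unmatched (drop j d) u).
Proof.
move=> uniq_d size_d; elim: u j => [|g u IH] j le_jd; first by rewrite size_drop.
rewrite -cat1s subst_word_cat cat_run_cat {1}/subst_word /= cats0.
have [lt_jd | ge_jd] := ltnP j (size d); last first.
  have -> : j = size d by apply/eqP; rewrite eqn_leq le_jd ge_jd.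
  by rewrite subnn !cat_run0 drop_size unmatched_nil.
rewrite cat_run_code // (drop_nth g lt_jd) /=.
by case: eqP => _; [apply: IH | rewrite -drop_nth // IH // ltnW].
Qed.

End CatalanAction.

Lemma cat_identity_kis n X (w w' : seq X) :
  holds_identity (Cat n) w w' -> holds_identity (Kis n) w w'.
Proof.
move=> /holds_identity_presentedP cat_ww'; apply/holds_identity_presentedP => f.
apply: kis_complete => d dec_d.
have uniq_d := decreasing_uniq dec_d.
have size_d : size d <= n.
  by rewrite -[leqRHS](size_enum_ord n); apply: uniq_leq_size => // x; rewrite mem_enum.
have run_d u := cat_run_unmatched u uniq_d size_d (leq0n _).
rewrite drop0 subn0 in run_d.
apply: unmatched_eq_size; rewrite -!run_d !subst_word_comp.
exact: cat_run_cong (cat_ww' _).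
Qed.

Lemma kis_identity_styl n X (w w' : seq X) :
  holds_identity (Kis n) w w' -> holds_identity (Styl n) w w'.
Proof. exact/holds_identity_quotient/kis_styl. Qed.

Lemma styl_identity_cat n X (w w' : seq X) :
  holds_identity (Styl n) w w' -> holds_identity (Cat n) w w'.
Proof. exact/holds_identity_quotient/styl_cat. Qed.

Theorem theorem1 (n : nat) : 2 <= n ->
  same_identities (Cat n) (Styl n) /\ same_identities (Styl n) (Kis n).
Proof.
(* the argument does not need [2 <= n] *)
move=> _; split=> X w w'; split.
- by move/cat_identity_kis/kis_identity_styl.
- exact: styl_identity_cat.
- by move/styl_identity_cat/cat_identity_kis.
- exact: kis_identity_styl.
Qed.
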